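(* Let $n,m,p\in\mathbb{N}$ with $m\ge p$, $A\in\mathbb{R}^{n\times n}$, $B\in\mathbb{R}^{n\times m}$, $C\in\mathbb{R}^{p\times n}$, and let $f:\mathbb{R}\times\mathbb{R}^n\times\mathbb{R}^m\to\mathbb{R}^n$ be continuous and bounded. Assume: (P1) $L\in\mathcal{C}^\infty(\mathbb{R}\to\mathbb{R}^{m\times m})$ is such that $L,\dot L,\ldots,L^{(n)}$ are bounded and there is $q\in\mathbb{N}$ with $\operatorname{rk} BL(t)=q\ge p$ for all $t\in\mathbb{R}$; (P2) there is $r\in\mathbb{N}$ such that $CA^kBL(t)=0$ for all $t\in\mathbb{R}$ and $CA^kf(t,x,u)=0$ for all $(t,x,u)\in\mathbb{R}\times\mathbb{R}^n\times\mathbb{R}^m$, for $k=0,\ldots,r-2$, and the matrix $\Gamma:=CA^{r-1}B\in\mathbb{R}^{p\times m}$ satisfies $\operatorname{rk}\Gamma L(t)=p$ for all $t\in\mathbb{R}$. Let $\mathcal{B}(t)$, $\mathcal{C}$, $\rho$, $V$, $\mathcal{N}(t)$ and $U(t)$ be defined as in the context. Then for all $t\in\mathbb{R}$ we have $\rho=\operatorname{rk}\mathcal{C}=\operatorname{rk}\mathcal{C}\mathcal{B}(t)=pr$, and, viewing $\mathcal{C}\mathcal{B}(t)\in\mathbb{R}^{rp\times rm}$ as an $r\times r$ block matrix with blocks $(\mathcal{C}\mathcal{B}(t))_{i,j}\in\mathbb{R}^{p\times m}$, $i,j=1,\ldots,r$, we have $(\mathcal{C}\mathcal{B}(t))_{i,j}=0$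 whenever $i+j\le r$ and $(\mathcal{C}\mathcal{B}(t))_{i,j}=(-1)^{j-1}\Gamma L(t)$ whenever $i+j=r+1$ (the blocks with $i+j>r+1$ are not specified). Furthermore, $U(t)$ is invertible for all $t\in\mathbb{R}$ with $$U(t)^{-1}=\big[\mathcal{B}(t)\big(\mathcal{C}\mathcal{B}(t)\big)^\dagger,\ V\big].$$
   Context: $M^\dagger$ denotes the Moore–Penrose pseudoinverse and $\operatorname{rk}$ the rank. For a matrix function $M$, $(\tfrac{d}{dt}-A)(M(t)):=\dot M(t)-AM(t)$, applied iteratively for powers. Define for $t\in\mathbb{R}$: $\mathcal{B}(t):=\big[BL(t),\ (\tfrac{d}{dt}-A)(BL(t)),\ \ldots,\ (\tfrac{d}{dt}-A)^{r-1}(BL(t))\big]\in\mathbb{R}^{n\times rm}$; $\mathcal{C}:=\big[C^\top,(CA)^\top,\ldots,(CA^{r-1})^\top\big]^\top\in\mathbb{R}^{rp\times n}$; $\rho:=\operatorname{rk}\mathcal{C}$; $V\in\mathbb{R}^{n\times(n-\rho)}$ any matrix with $\operatorname{im}V=\ker\mathcal{C}$; $\mathcal{N}(t):=V^\dagger\big[I_n-\mathcal{B}(t)(\mathcal{C}\mathcal{B}(t))^\dagger\mathcal{C}\big]\in\mathbb{R}^{(n-\rho)\times n}$; $U(t):=\begin{bmatrix}\mathcal{C}\\ \mathcal{N}(t)\end{bmatrix}\in\mathbb{R}^{(n-\rho+pr)\times n}$. *)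

From HB Require Import structures.
From mathcomp Require Import all_boot all_order all_algebra.
From mathcomp Require Import all_classical all_reals all_analysis.
Unset Printing Implicit Defensive.
Import Order.TTheory GRing.Theory Num.Theory.
Import numFieldNormedType.Exports.
Local Open Scope classical_set_scope.
Local Open Scope ring_scope.

Section Defs.
Context {R : realType}.

Definition is_pinv {a b} (M : 'M[R]_(a, b)) (X : 'M[R]_(b, a)) : Prop :=
  [/\ M *m X *m M = M, X *m M *m X = X,
      (M *m X)^T = M *m X & (X *m M)^T = X *m M].

(* Moore-Penrose pseudoinverse M^dagger (the unique X with is_pinv M X;
   it exists over the reals). *)
Definition pinv {a b} (M : 'M[R]_(a, b)) : 'M[R]_(b, a) :=
  xget 0 [set X | is_pinv M X].

Definition dA {n c} (A : 'M[R]_n) (M : R -> 'M[R]_(n, c)) : R -> 'M[R]_(n, c) :=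
  fun t => derive1 M t - A *m M t.

Definition calB {n m} (A : 'M[R]_n) (B : 'M[R]_(n, m)) (L : R -> 'M[R]_m)
  (r : nat) (t : R) : 'M[R]_(n, \sum_(j < r) m) :=
  \mxrow_(j < r) (iter j (dA A) (fun s => B *m L s) t).

Definition calC {n p} (A : 'M[R]_n) (C : 'M[R]_(p, n)) (r : nat)
  : 'M[R]_(\sum_(i < r) p, n) :=
  \mxcol_(i < r) (C *m A ^+ i).

Definition rho {n p} (A : 'M[R]_n) (C : 'M[R]_(p, n)) (r : nat) : nat :=
  \rank (calC A C r).

(* block (i,j) (0-indexed) of script C * script B(t), viewed as an r x r block
   matrix with blocks in R^{p x m} *)
Definition CBblock {n m p} (A : 'M[R]_n) (B : 'M[R]_(n, m)) (C : 'M[R]_(p, n))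
  (L : R -> 'M[R]_m) (r : nat) (t : R) (i j : 'I_r) : 'M[R]_(p, m) :=
  @submxblock R r r (fun _ => p) (fun _ => m) (calC A C r *m calB A B L r t) i j.

Definition calN {n m p} (A : 'M[R]_n) (B : 'M[R]_(n, m)) (C : 'M[R]_(p, n))
  (L : R -> 'M[R]_m) (r : nat) (V : 'M[R]_(n, n - rho A C r)) (t : R)
  : 'M[R]_(n - rho A C r, n) :=
  pinv V *m (1%:M - calB A B L r t *m pinv (calC A C r *m calB A B L r t)
                     *m calC A C r).

Definition calU {n m p} (A : 'M[R]_n) (B : 'M[R]_(n, m)) (C : 'M[R]_(p, n))
  (L : R -> 'M[R]_m) (r : nat) (V : 'M[R]_(n, n - rho A C r)) (t : R)
  : 'M[R]_(\sum_(i < r) p + (n - rho A C r), n) :=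
  col_mx (calC A C r) (calN A B C L r V t).

Definition calUinv {n m p} (A : 'M[R]_n) (B : 'M[R]_(n, m)) (C : 'M[R]_(p, n))
  (L : R -> 'M[R]_m) (r : nat) (V : 'M[R]_(n, n - rho A C r)) (t : R)
  : 'M[R]_(n, \sum_(i < r) p + (n - rho A C r)) :=
  row_mx (calB A B L r t *m pinv (calC A C r *m calB A B L r t)) V.

End Defs.

From Pilot Require Import Defs.
From HB Require Import structures.
From mathcomp Require Import all_boot all_order all_algebra.
From mathcomp Require Import all_classical all_reals all_analysis.
From mathcomp Require Import zify.
Import Order.TTheory GRing.Theory Num.Theory.
Import numFieldNormedType.Exports.
Local Open Scope classical_set_scope.
Local Open Scope ring_scope.

(* If [C A^i M(s)] vanishes identically, then
   [C A^i (d/dt - A) M = - C A^(i+1) M]. Starting from [C A^k B L = 0] for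
   [k <= r - 2], this shows that the blocks [C A^i (d/dt - A)^j (B L)] of
   [calC calB(t)] vanish above the anti-diagonal and equal [(-1)^j Gamma L(t)]
   on it. As these anti-diagonal blocks have full row rank [p], so has the
   block anti-triangular matrix [calC calB(t)]: its rank is [pr], which
   squeezes [rk calC] between [pr] and its number of rows [pr]. Hence [calC calB (calC calB)^dagger = I], and since the
   columns of [V] form a basis of [ker calC], [V^dagger V = I]; a block
   computation then gives [U(t) [calB (calC calB)^dagger, V] = I] with [U(t)]
   square. *)

Section SmoothMatrixFunctions.
Context {R : realType}.

Definition smooth {V : normedModType R} (g : R -> V) :=
  forall (k : nat) (t : R), derivable (derive1n k g) t 1.

Lemma is_derive_mulmxl {a b c : nat} (P : 'M[R]_(a, b)) {g : R -> 'M[R]_(b, c)}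
    {t : R} {dg : 'M[R]_(b, c)} :
  is_derive t 1 g dg -> is_derive t 1 (fun s => P *m g s) (P *m dg).
Proof.
case=> /derivable_mxP g_ij <-.
have entryE i j : (fun s => (P *m g s) i j) = \sum_(k < b) (fun s => P i k * g s k j).
  by apply/funext => s; rewrite fct_sumE mxE.
have Pg_ij i j : derivable (fun s => (P *m g s) i j) t 1.
  by rewrite entryE; apply: derivable_sum => k; apply: derivableM.
have Pg : derivable (fun s => P *m g s) t 1 by apply/derivable_mxP.
apply: DeriveDef => //; rewrite !derive_mx //; last exact/derivable_mxP.
apply/matrixP => i j; rewrite !mxE entryE derive_sum => [|k]; last exact: derivableM.
by apply: eq_bigr => k _; rewrite mxE deriveMl.
Qed.

Lemma derive1n_mulmxl {a b c : nat} (P : 'M[R]_(a, b)) (g : R -> 'M[R]_(b, c)) k :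
  smooth g -> derive1n k (fun s => P *m g s) = (fun s => P *m derive1n k g s).
Proof.
move=> g_smooth; elim: k => [|k IH]; first by rewrite !derive1n0.
apply/funext => t; rewrite derive1nS IH derive1nS !derive1E.
by apply: derive_val; apply/is_derive_mulmxl/derivableP.
Qed.

Lemma smooth_mulmxl {a b c : nat} (P : 'M[R]_(a, b)) {g : R -> 'M[R]_(b, c)} :
  smooth g -> smooth (fun s => P *m g s).
Proof.
move=> g_smooth k t; rewrite derive1n_mulmxl //.
by apply: ex_derive; apply/is_derive_mulmxl/derivableP.
Qed.

Section ShiftedDerivative.
Context {n c : nat} (A : 'M[R]_n).
Implicit Type g : R -> 'M[R]_(n, c).

Lemma dAE g : dA A g = derive1 g - (fun s => A *m g s).
Proof. by []. Qed.

Lemma is_derive_dA g t :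
  derivable g t 1 -> derivable (derive1 g) t 1 ->
  is_derive t 1 (dA A g) (dA A (derive1 g) t).
Proof.
move=> /derivableP dg /derivableP ddg.
by rewrite dAE /dA !derive1E; apply: is_deriveB => //; apply: is_derive_mulmxl.
Qed.

Lemma derive1n_dA g k : smooth g -> derive1n k (dA A g) = dA A (derive1n k g).
Proof.
move=> g_smooth; elim: k => [|k IH]; first by rewrite !derive1n0.
apply/funext => t; rewrite derive1nS IH derive1E derive1nS.
by apply: derive_val; apply: is_derive_dA; rewrite // -derive1nS.
Qed.

Lemma smooth_dA g : smooth g -> smooth (dA A g).
Proof.
move=> g_smooth k t; rewrite derive1n_dA //.
by apply: ex_derive; apply: is_derive_dA; rewrite // -derive1nS.
Qed.

Lemma smooth_iter_dA {g} : smooth g -> forall j, smooth (iter j (dA A) g).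
Proof.
move=> g_smooth; elim=> [|j IH]; first exact: g_smooth.
by rewrite iterS; apply: smooth_dA.
Qed.

Lemma mulmx_dA_annihilated {k} (P : 'M[R]_(k, n)) {g t} :
  derivable g t 1 -> (forall s, P *m g s = 0) ->
  P *m dA A g t = - (P *m A *m g t).
Proof.
move=> /derivableP dg Pg0; rewrite /dA mulmxBr mulmxA derive1E.
have dPg := is_derive_mulmxl P dg.
have <- : 'D_1 (fun s => P *m g s) t = P *m 'D_1 g t by apply: derive_val.
have -> : (fun s => P *m g s) = cst 0 by apply/funext => s; rewrite Pg0.
by rewrite derive_cst sub0r.
Qed.

End ShiftedDerivative.
End SmoothMatrixFunctions.

Section CalCBBlocks.
Context {R : realType} {n m p r : nat}.
Context {A : 'M[R]_n} {B : 'M[R]_(n, m)} {C : 'M[R]_(p, n)} {L : R -> 'M[R]_m}.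
Hypothesis L_smooth : smooth L.
Hypothesis CAkBL0 : forall k : nat, (k.+2 <= r)%N ->
  forall t, C *m A ^+ k *m (B *m L t) = 0.

Let BLj j := iter j (dA A) (fun s => B *m L s).

Let derivable_BLj j t : derivable (BLj j) t 1.
Proof. exact: (smooth_iter_dA A (smooth_mulmxl B L_smooth) j 0). Qed.

Let mulmx_CA_powS i : C *m A ^+ i *m A = C *m A ^+ i.+1.
Proof. by rewrite -mulmxA -[A ^+ i *m A]/(A ^+ i * A) -exprSr. Qed.

Lemma mulmx_CA_BLj_eq0 i j t : (i + j + 2 <= r)%N -> C *m A ^+ i *m BLj j t = 0.
Proof.
elim: j i t => [|j IH] i t le_ijr; first by apply: CAkBL0; lia.
rewrite /BLj iterS -/(BLj j) (mulmx_dA_annihilated A _ (derivable_BLj j t)); last first.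
  by move=> s; apply: IH; lia.
by rewrite mulmx_CA_powS IH ?oppr0 //; lia.
Qed.

Lemma mulmx_CA_BLj_antidiag i j t : (i + j + 1 = r)%N ->
  C *m A ^+ i *m BLj j t = (-1) ^+ j *: (C *m A ^+ r.-1 *m B *m L t).
Proof.
elim: j i => [|j IH] i eq_ijr.
  by rewrite /= expr0 scale1r mulmxA -eq_ijr addn0 addn1.
rewrite /BLj iterS -/(BLj j) (mulmx_dA_annihilated A _ (derivable_BLj j t)); last first.
  by move=> s; apply: mulmx_CA_BLj_eq0; lia.
by rewrite mulmx_CA_powS IH ?exprS ?mulN1r ?scaleNr //; lia.
Qed.

Lemma CBblockE t (i j : 'I_r) : CBblock A B C L r t i j = C *m A ^+ i *m BLj j t.
Proof. by rewrite /CBblock /calC /calB mul_mxcol_mxrow mxblockK. Qed.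

End CalCBBlocks.

Section BlockAntitriangular.
Variables (F : fieldType) (r p m : nat) (X : 'I_r -> 'I_r -> 'M[F]_(p, m)).
Hypothesis X_above0 : forall i j : 'I_r, (i + j + 2 <= r)%N -> X i j = 0.
Hypothesis X_antidiag_free : forall i j : 'I_r, (i + j + 1)%N = r -> row_free (X i j).

(* Column [k] of [v *m \mxblock X] only involves the blocks [v_i] with
   [i >= r - k - 1]; those with [i >= r - k] vanish by induction on [k], which
   leaves [v_(r-k-1) *m X_(r-k-1,k) = 0]. *)
Lemma row_free_mxblock_antitriangular : row_free (\mxblock_(i < r, j < r) X i j).
Proof.
apply: inj_row_free => v vX0.
have col_eq0 j : \sum_(i < r) submxrow v i *m X i j = 0.
  have := congr1 (fun Y => submxrow Y j) vX0.
  by rewrite /= -[v in v *m _]submxrowK mul_mxrow_mxblock mxrowK submxrow0.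
have v_eq0 k : forall i : 'I_r, (r <= i + k)%N -> submxrow v i = 0.
  elim: k => [|k IH] i le_r_ik; first by have := ltn_ord i; lia.
  have [/IH //|lt_ik_r] := leqP r (i + k).
  have lt_kr : (k < r)%N by lia.
  have := col_eq0 (Ordinal lt_kr); rewrite (bigD1 i) //= big1 ?addr0 => [|i' ne_i'i].
    by move/eqP; rewrite mulmx_free_eq0 ?X_antidiag_free //=; [move/eqP | lia].
  have [le_i'k|lt_r_i'k] := leqP (i' + k + 2) r; first by rewrite X_above0 ?mulmx0.
  by rewrite IH ?mul0mx //; move: ne_i'i; rewrite -val_eqE /=; lia.
by rewrite -[v]submxrowK -mxrow0; apply: eq_mxrow => i; apply: (v_eq0 r); lia.
Qed.

End BlockAntitriangular.

Lemma mulmx_tr_row_eq0 (R : realDomainType) b (w : 'rV[R]_b) : w *m w^T = 0 -> w = 0.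
Proof.
move/matrixP/(_ 0 0); rewrite !mxE; under eq_bigr do rewrite mxE -expr2.
move/psumr_eq0P => sq_eq0; apply/rowP => j; rewrite mxE.
by apply/eqP; rewrite -sqrf_eq0; apply/eqP/sq_eq0 => // k _; apply: sqr_ge0.
Qed.

Lemma unitmx_mul_tr (R : realFieldType) a b (M : 'M[R]_(a, b)) :
  row_free M -> M *m M^T \in unitmx.
Proof.
move=> free_M; rewrite -row_free_unit; apply: inj_row_free => v.
rewrite mulmxA => vMMt0; apply/eqP; rewrite -(mulmx_free_eq0 _ free_M); apply/eqP.
by apply: mulmx_tr_row_eq0; rewrite trmx_mul mulmxA vMMt0 mul0mx.
Qed.

Section PseudoInverse.
Context {R : realType}.

Lemma is_pinv_row_free {a b : nat} {M : 'M[R]_(a, b)} :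
  row_free M -> is_pinv M (M^T *m invmx (M *m M^T)).
Proof.
move=> /unitmx_mul_tr MMt_unit.
have MX : M *m (M^T *m invmx (M *m M^T)) = 1%:M by rewrite mulmxA mulmxV.
split; first by rewrite MX mul1mx.
- by rewrite -mulmxA MX mulmx1.
- by rewrite MX trmx1.
by rewrite !trmx_mul trmx_inv trmx_mul trmxK !mulmxA.
Qed.

Lemma is_pinv_tr {a b : nat} {M : 'M[R]_(a, b)} {X} : is_pinv M X -> is_pinv M^T X^T.
Proof.
case=> MXM XMX MX_sym XM_sym; split; rewrite -?trmx_mul.
- by rewrite mulmxA MXM.
- by rewrite mulmxA XMX.
- by rewrite XM_sym.
by rewrite MX_sym.
Qed.

Lemma is_pinv_pinv {a b : nat} {M : 'M[R]_(a, b)} : (exists X, is_pinv M X) -> is_pinv M (Defs.pinv M).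
Proof. exact: xgetPex. Qed.

Lemma mulmx_pinv {a b : nat} {M : 'M[R]_(a, b)} : row_free M -> M *m Defs.pinv M = 1%:M.
Proof.
move=> free_M; have [MXM _ _ _] := is_pinv_pinv (ex_intro _ _ (is_pinv_row_free free_M)).
have [Y MY] := row_freeP free_M.
by rewrite -[LHS]mulmx1 -MY mulmxA MXM.
Qed.

Lemma mulpinvmx {a b : nat} {M : 'M[R]_(a, b)} : row_free M^T -> Defs.pinv M *m M = 1%:M.
Proof.
move=> free_Mt; have /is_pinv_tr := is_pinv_row_free free_Mt; rewrite trmxK => pinvM.
have [MXM _ _ _] := is_pinv_pinv (ex_intro _ _ pinvM).
have [Y /(congr1 trmx)] := row_freeP free_Mt; rewrite trmx_mul trmxK trmx1 => YtM.
by rewrite -[LHS]mul1mx -YtM -mulmxA -[M in RHS]MXM !mulmxA.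
Qed.

End PseudoInverse.

Section KernelBasis.
Context {F : fieldType} {k n : nat} {K : 'M[F]_(k, n)} {V : 'M[F]_(n, n - \rank K)}.
Hypothesis kerK : forall x : 'cV_n, K *m x = 0 <-> exists y, x = V *m y.

Lemma mulmx_ker_basis : K *m V = 0.
Proof.
apply/matrixP => i j; have := (kerK (V *m delta_mx j 0)).2 (ex_intro _ _ erefl).
by rewrite mulmxA -colE => /matrixP/(_ i 0); rewrite !mxE.
Qed.

Lemma row_free_tr_ker_basis : row_free V^T.
Proof.
suff VtE : (V^T == kermx K^T)%MS.
  by rewrite /row_free (eqmxP VtE) mxrank_ker mxrank_tr.
apply/andP; split; first by apply/sub_kermxP; rewrite -trmx_mul mulmx_ker_basis trmx0.
apply/row_subP => i; set x := (row i (kermx K^T))^T.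
have Kx0 : K *m x = 0.
  apply: trmx_inj; rewrite trmx_mul trmxK trmx0; apply/sub_kermxP; exact: row_sub.
have [y xE] := (kerK x).1 Kx0.
by apply/submxP; exists y^T; rewrite -trmx_mul -xE trmxK.
Qed.

End KernelBasis.

Lemma mul_col_row_compl (R : pzRingType) k n l (K : 'M[R]_(k, n)) (W : 'M[R]_(n, k))
    (V : 'M[R]_(n, l)) (V' : 'M[R]_(l, n)) :
  K *m W = 1%:M -> K *m V = 0 -> V' *m V = 1%:M ->
  col_mx K (V' *m (1%:M - W *m K)) *m row_mx W V = 1%:M.
Proof.
move=> KW KV V'V; rewrite mul_col_row (scalar_mx_block k l) KW KV -!mulmxA.
by rewrite !mulmxBl !mul1mx -!mulmxA KW KV mulmx1 mulmx0 subrr subr0 mulmx0 V'V.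
Qed.

Lemma mulmx1C_dim (R : comPzRingType) a b (U : 'M[R]_(a, b)) (W : 'M[R]_(b, a)) :
  a = b -> U *m W = 1%:M -> W *m U = 1%:M.
Proof. by move=> eq_ab; move: U W; rewrite eq_ab; apply: mulmx1C. Qed.

Theorem lemma1 (R : realType) (n m p : nat) (hmp : (p <= m)%N)
  (A : 'M[R]_n) (B : 'M[R]_(n, m)) (C : 'M[R]_(p, n))
  (f : R -> 'cV[R]_n -> 'cV[R]_m -> 'cV[R]_n)
  (f_cont : continuous (fun z : R * 'cV[R]_n * 'cV[R]_m => f z.1.1 z.1.2 z.2))
  (f_bnd : exists M : R, forall t x u, `|f t x u| <= M)
  (L : R -> 'M[R]_m)
  (L_smooth : forall (k : nat) (t : R), derivable (derive1n k L) t 1)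
  (L_bnd : forall k : nat, (k <= n)%N ->
     exists M : R, forall t, `|derive1n k L t| <= M)
  (q : nat) (hqp : (p <= q)%N) (hq : forall t, \rank (B *m L t) = q)
  (r : nat) (hr : (1 <= r)%N)
  (hBL : forall k : nat, (k.+2 <= r)%N ->
     forall t, C *m A ^+ k *m (B *m L t) = 0)
  (hf : forall k : nat, (k.+2 <= r)%N ->
     forall t x u, C *m A ^+ k *m f t x u = 0)
  (hGamma : forall t, \rank (C *m A ^+ r.-1 *m B *m L t) = p)
  (V : 'M[R]_(n, n - rho A C r))
  (hV : forall x : 'cV[R]_n,
     calC A C r *m x = 0 <-> exists y : 'cV[R]_(n - rho A C r), x = V *m y) :
  forall t : R,
    [/\ rho A C r = (p * r)%N,
        \rank (calC A C r *m calB A B L r t) = (p * r)%N,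
        (forall i j : 'I_r, (i + j + 2 <= r)%N -> CBblock A B C L r t i j = 0),
        (forall i j : 'I_r, (i + j + 1)%N = r ->
           CBblock A B C L r t i j = (-1) ^+ j *: (C *m A ^+ r.-1 *m B *m L t))
      & calU A B C L r V t *m calUinv A B C L r V t = 1%:M
        /\ calUinv A B C L r V t *m calU A B C L r V t = 1%:M].
Proof.
move=> t; set M := calC A C r *m calB A B L r t.
have sum_p : (\sum_(i < r) p = p * r)%N by rewrite big_const_ord iter_addn_0.
have free_Gamma : row_free (C *m A ^+ r.-1 *m B *m L t) by rewrite /row_free hGamma.
have free_M : row_free M.
  rewrite /M /calC /calB mul_mxcol_mxrow.
  apply: row_free_mxblock_antitriangular => i j ij_r.
    exact: (mulmx_CA_BLj_eq0 L_smooth hBL).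
  by rewrite (mulmx_CA_BLj_antidiag L_smooth hBL) // /row_free eqmx_scale ?signr_eq0.
have rank_M : \rank M = (p * r)%N by rewrite (eqP free_M) sum_p.
have rho_pr : rho A C r = (p * r)%N.
  apply/eqP; rewrite eqn_leq -{1}sum_p rank_leq_row -rank_M.
  exact: mxrankM_maxl.
have CV0 := mulmx_ker_basis hV.
have UUinv : calU A B C L r V t *m calUinv A B C L r V t = 1%:M.
  apply: mul_col_row_compl CV0 (mulpinvmx (row_free_tr_ker_basis hV)).
  by rewrite mulmxA mulmx_pinv.
split=> //.
- by move=> i j; rewrite CBblockE; exact: (mulmx_CA_BLj_eq0 L_smooth hBL).
- by move=> i j; rewrite CBblockE; exact: (mulmx_CA_BLj_antidiag L_smooth hBL).
split=> //; apply: mulmx1C_dim UUinv.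
by rewrite sum_p -rho_pr subnKC // rank_leq_col.
Qed.
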